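(* Let $p\geq5$, $n=p-1$, and let $G$ be $N$ or $\mathbb{G}$. (1) For $s>\mathrm{vcd}(G)$, the groups $H^s(G,\mathbf{E}_t)\cong\widehat{H}^s(G,\mathbf{E}_t)$ are zero unless $t=2n\epsilon+2pnl$ for some $\epsilon\in\{0,1\}$ and $l\in\mathbb{Z}$. (2) In the $\beta$-inverted homotopy fixed point spectral sequence $\beta^{-1}E_r^{s,t}(G,\mathbf{E})$, let $x\in\beta^{-1}E_2^{t+1,t}(G,\mathbf{E})\cong\widehat{H}^{t+1}(G,\mathbf{E}_t)$ with $n^2\leq t\leq 4pn$. If $x$ survives to the $E_{2n+2}=E_{2n^2+1}$-page, then $x$ is not the target of a $d_{2n^2+1}$-differential.
   Context: Setting: $n=p-1$, $\mathbb{G}$ the Morava stabilizer group of the Honda formal group law of height $n$, $\mathbf{E}$ the Lubin–Tate spectrum, $\mathbf{E}_t=\pi_t\mathbf{E}$; $C_p\subset\mathbb{G}$ generated by a primitive $p$-th root of unity, $N=N_{\mathbb{G}}(C_p)$; $\mathrm{vcd}(N)=n$, $\mathrm{vcd}(\mathbb{G})=n^2$. $\widehat{H}^*$ is Farrell–Tate cohomology, and $\widehat{H}^*(G,\mathbf{E}_* )\cong\mathbb{F}_p[\alpha,\beta^{\pm1},\Delta^{\pm1}]/(\alpha^2)\otimes\Lambda(a_0,\dots,a_{n-1})$ with $(s,t)$-bidegrees $|\alpha|=(1,2n)$, $|\beta|=(2,2pn)$, $|\Delta|=(0,2pn^2)$, $|a_i|=(1,2p^2ni)$. The $\beta$-inverted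 homotopy fixed point spectral sequence is the localization, at a lift of the class $\beta$ detecting $\beta_1\in\pi_{2pn-2}S^0$, of the $K(n)$-local $\mathbf{E}$-based Adams–Novikov (homotopy fixed point) spectral sequence for $\mathbf{E}^{hG}$; its $E_2$-page is $\widehat{H}^*(G,\mathbf{E}_* )$, differentials are $d_r:E_r^{s,t}\to E_r^{s+r,t+r-1}$, and it is a direct sum, over the monomial basis of $\Lambda(a_0,\dots,a_{n-1})$, of shifts of the spectral sequence with $E_2=\mathbb{F}_p[\alpha,\beta^{\pm1},\Delta^{\pm1}]/(\alpha^2)$ and differentials generated by $d_{2n+1}(\Delta)=\alpha\beta^n$, $d_{2n^2+1}(\Delta^n\alpha)=\beta^{n^2+1}$. *)

From HB Require Import structures.
From mathcomp Require Import all_boot all_order all_algebra.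
Set Implicit Arguments. Unset Strict Implicit. Unset Printing Implicit Defensive.
Import Order.TTheory GRing.Theory Num.Theory.
Local Open Scope ring_scope.

(* The two groups G = N = N_GG(C_p) and G = GG (Morava stabilizer group). *)
Inductive grp := GN | GMorava.

Definition vcd (p : nat) (G : grp) : int :=
  match G with GN => (p.-1)%:Z | GMorava => (p.-1 ^ 2)%:Z end.

(* Monomial basis of  F_p[alpha, beta^{+-1}, Delta^{+-1}]/(alpha^2) (x)
   Lambda(a_0, ..., a_{n-1}):
     alpha^eps * beta^jj * Delta^kk * prod_{i in ext} a_i . *)
Record mono (n : nat) := Mono {
  eps : bool; jj : int; kk : int; ext : {set 'I_n} }.

Definition sdeg (n : nat) (m : mono n) : int :=
  (eps m)%:Z + 2 * jj m + (#|ext m|)%:Z.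

Definition tdeg (p : nat) (m : mono p.-1) : int :=
  let n := (p.-1)%:Z in let q := p%:Z in
  2 * n * (eps m)%:Z + 2 * q * n * jj m + 2 * q * n ^+ 2 * kk m
  + 2 * q ^+ 2 * n * (\sum_(i in ext m) (i : nat))%:Z.

(* An element of E_2 (= Farrell-Tate cohomology) is a coefficient function on
   monomials; it lies in E_2^{s,t} when supported in bidegree (s,t)
   (each bidegree only contains finitely many monomials). *)
Definition elt (p : nat) := mono p.-1 -> 'F_p.

Definition in_bideg (p : nat) (s t : int) (x : elt p) : Prop :=
  forall m, x m != 0 -> sdeg m = s /\ tdeg m = t.

(* d_{2n+1}: the derivation with d(Delta) = alpha beta^n, so
   d(beta^j Delta^k a_S) = k alpha beta^(j+n) Delta^(k-1) a_S  (up to the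
   sign irrelevant for kernels/images), d(alpha ...) = 0.
   Coefficientwise: *)
Definition d_first (p : nat) (x : elt p) : elt p :=
  fun m => if eps m then
             (kk m + 1)%:~R * x (Mono false (jj m - (p.-1)%:Z) (kk m + 1) (ext m))
           else 0.

(* d_{2n^2+1} on E_{2n+2} = E_{2n^2+1} = H(E_2, d_{2n+1}), generated (Leibniz,
   linearity over the permanent cycles beta, Delta^p) by
   d(Delta^n alpha) = beta^(n^2+1):
     alpha beta^j Delta^k a_S |-> beta^(j+n^2+1) Delta^(k-n) a_S  if k = n mod p,
     every other monomial     |-> 0.
   This map on E_2-representatives sends d_{2n+1}-cycles to cycles and
   d_{2n+1}-boundaries to 0, hence induces d_{2n^2+1}. *)
Definition d_second (p : nat) (y : elt p) : elt p :=
  fun m => if eps m then 0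
           else if (p%:Z %| kk m)%Z then
             y (Mono true (jj m - ((p.-1) ^ 2)%:Z - 1) (kk m + (p.-1)%:Z) (ext m))
           else 0.

(** Every monomial has internal degree [t = 2n(eps + p l)], which is (1).
    For (2), a nonzero [d_second y] in the bidegree of [x] would need a source
    monomial [alpha beta^j Delta^k a_S] with [k = n mod p] and [s = t'] for
    [t' = t - 2n^2]; expanding both degrees gives
    [|S| + 1 + 2l = 2p (n (1 + l + c) + sum S)] where [k = pc + n].  In the
    range of [t] we have [l] in {0, 1}, so the left side lies strictly between
    [0] and [2p]: impossible.  Hence [d_second y = 0] there, and [x = d_first z]
    would be a [d_first]-boundary. *)
From HB Require Import structures.
From mathcomp Require Import all_boot all_order all_algebra.
From mathcomp Require Import zify ring.
From Stdlib Require Import FunctionalExtensionality.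
Import Order.TTheory GRing.Theory Num.Theory.
Local Open Scope ring_scope.

Section Degrees.

Variable p : nat.
Local Notation n := (p.-1)%:Z.

Definition tlevel (m : mono p.-1) : int :=
  jj m + n * kk m + p%:Z * (\sum_(i in ext m) (i : nat))%N%:Z.

Lemma tdegE (m : mono p.-1) :
  tdeg m = 2 * n * (eps m)%:Z + 2 * p%:Z * n * tlevel m.
Proof. by rewrite /tdeg /tlevel; ring. Qed.

Hypothesis p_gt2 : (2 < p)%N.

Let pE : p%:Z = n + 1.
Proof. by rewrite -PoszD addn1 prednK //; lia. Qed.

Lemma tlevel_bounds (m : mono p.-1) : eps m ->
  - n ^+ 2 <= tdeg m -> tdeg m <= 2 * n ^+ 2 + 4 * n ->
  0 <= tlevel m <= 1.
Proof.
move=> em; rewrite tdegE em pE /=.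
have n_gt1 : 1 < n by lia.
move: (tlevel m) => l lo hi.
nia.
Qed.

Lemma card_ext_le (m : mono p.-1) : (#|ext m| <= p.-1)%N.
Proof. by rewrite -[X in (_ <= X)%N]card_ord max_card. Qed.

Lemma d_second_source_card_ext (m : mono p.-1) (c : int) :
  eps m -> kk m = p%:Z * c + n -> sdeg m = tdeg m ->
  (#|ext m|)%:Z + 1 + 2 * tlevel m
    = 2 * p%:Z * (n * (1 + tlevel m + c) + (\sum_(i in ext m) (i : nat))%N%:Z).
Proof.
move=> em kmE; rewrite /sdeg tdegE em /=.
have jjE : jj m = tlevel m - n * kk m - p%:Z * (\sum_(i in ext m) (i : nat))%N%:Z.
  by rewrite /tlevel; ring.
rewrite jjE kmE pE; set l := tlevel m; set w := (\sum_(i in ext m) _)%N => sdegE.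
have -> : (#|ext m|)%:Z = 2 * n + 2 * (n + 1) * n * l - 1
                          - 2 * (l - n * ((n + 1) * c + n) - (n + 1) * w%:Z).
  by rewrite -(mulr1 (2 * n)) -sdegE; ring.
ring.
Qed.

Lemma d_second_source_out_of_range (m : mono p.-1) (c t : int) :
  eps m -> kk m = p%:Z * c + n -> sdeg m = tdeg m -> tdeg m = t - 2 * n ^+ 2 ->
  n ^+ 2 <= t -> t <= 4 * p%:Z * n -> False.
Proof.
move=> em kmE sdeg_tdeg tdeg_shift lo hi.
have /andP[l_ge0 l_le1] : 0 <= tlevel m <= 1.
  by apply: tlevel_bounds; rewrite // tdeg_shift; move: hi; rewrite pE; lia.
have := @d_second_source_card_ext m c em kmE sdeg_tdeg.
have := card_ext_le m; rewrite pE; move: l_ge0 l_le1.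
move: (#|ext m|) (tlevel m) (n * _ + _) => s0 l k l_ge0 l_le1 card_le sE.
have [k_le0 | k_gt0] := lerP k 0.
  have : 2 * (n + 1) * k <= 0 by rewrite pmulr_rle0 //; lia.
  lia.
have : 2 * (n + 1) <= 2 * (n + 1) * k by rewrite ler_peMr //; lia.
lia.
Qed.

Lemma d_second_eq0 (t : int) (y : elt p) :
  n ^+ 2 <= t -> t <= 4 * p%:Z * n ->
  in_bideg (t - 2 * n ^+ 2) (t - 2 * n ^+ 2) y -> forall m, d_second y m = 0.
Proof.
move=> lo hi y_bideg m; rewrite /d_second.
case: (eps m) => //; case: ifP => // /dvdzP[c kmE].
apply/eqP/negPn/negP => /y_bideg[sE tE].
apply: (@d_second_source_out_of_range _ c t _ _ _ tE) => //=.
- by rewrite kmE mulrC.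
- by rewrite sE tE.
Qed.

End Degrees.

Theorem proposition5p4 (p : nat) (G : grp) :
  prime p -> (5 <= p)%N ->
  (* (1) for s > vcd(G), \hat H^s(G, E_t) = 0 unless t = 2 n eps + 2 p n l *)
  (forall s t : int, vcd p G < s ->
     (exists x : elt p, in_bideg s t x /\ exists m, x m != 0) ->
     exists (e : bool) (l : int),
       t = 2 * (p.-1)%:Z * e%:Z + 2 * p%:Z * (p.-1)%:Z * l) /\
  (* (2) classes in E^{t+1,t} with n^2 <= t <= 4pn surviving to
         E_{2n+2} = E_{2n^2+1} are not targets of d_{2n^2+1} *)
  (forall (t : int) (x : elt p),
     ((p.-1) ^ 2)%:Z <= t -> t <= 4 * p%:Z * (p.-1)%:Z ->
     in_bideg (t + 1) t x ->
     (forall m, d_first x m = 0) ->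
     ~ (exists w, in_bideg (t + 1 - (2 * (p.-1)%:Z + 1)) (t - 2 * (p.-1)%:Z) w
                  /\ x = d_first w) ->
     forall y z : elt p,
       in_bideg (t + 1 - (2 * ((p.-1) ^ 2)%:Z + 1)) (t - 2 * ((p.-1) ^ 2)%:Z) y ->
       (forall m, d_first y m = 0) ->
       in_bideg (t + 1 - (2 * (p.-1)%:Z + 1)) (t - 2 * (p.-1)%:Z) z ->
       x <> (fun m => d_second y m + d_first z m)).
Proof.
move=> _ p_ge5; split.
  move=> s t _ [x [x_bideg [m xm]]].
  have [_ <-] := x_bideg m xm.
  by exists (eps m), (tlevel p m); rewrite tdegE.
move=> t x lo hi _ _ not_boundary y z y_bideg _ z_bideg xE.
have p_gt2 : (2 < p)%N by apply: leq_trans p_ge5.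
have n2E : ((p.-1) ^ 2)%:Z = (p.-1)%:Z ^+ 2 by rewrite expr2 -PoszM mulnn.
rewrite n2E in lo y_bideg.
have sE : t + 1 - (2 * (p.-1)%:Z ^+ 2 + 1) = t - 2 * (p.-1)%:Z ^+ 2 by ring.
rewrite sE in y_bideg.
apply: not_boundary; exists z; split => //.
rewrite xE; apply: functional_extensionality => m.
by rewrite (@d_second_eq0 p p_gt2 _ _ lo hi y_bideg) add0r.
Qed.
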